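(* Let $C_0>0$, $\mathcal{U}_0=e^{C_0}/(1+e^{C_0})^2$, $m\in\mathcal{M}$, and let $\{\psi_1,\dots,\psi_{D}\}$ ($D=D_m$) be an orthonormal basis (for $\langle\cdot,\cdot\rangle_n$) of $\mathrm{span}\{\phi_k,k\in m\}$. For $\beta\in\mathbb{R}^D$ put $f_\beta=\sum_{j=1}^D\beta_j\psi_j$, and let $\Lambda_m$ be the set of $\beta$ such that $f_\beta\in\mathcal{S}_m\cap\mathbb{L}_\infty(C_0)$. If $\beta^*$ is any minimizer of $\beta\mapsto\gamma(f_\beta)$ over $\Lambda_m$, then for all $\beta\in\Lambda_m$, $$\frac{\mathcal{U}_0^2}{2}\|f_\beta-f_{\beta^*}\|_n^2\le\gamma(f_\beta)-\gamma(f_{\beta^*}).$$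
   Context: Observations $(Y_1,x_1),\dots,(Y_n,x_n)\in\{0,1\}\times\mathcal{X}$, deterministic $x_i$, independent $Y_i$ with $\mathbb{E}_{f_0}(Y_i)=\pi_{f_0}(x_i)$, $\pi_f(x)=e^{f(x)}/(1+e^{f(x)})$. $\gamma_n(f)=\frac1n\sum_{i=1}^n\{\log(1+e^{f(x_i)})-Y_if(x_i)\}$, $\gamma(f)=\mathbb{E}_{f_0}[\gamma_n(f)]$. $\langle f,g\rangle_n=\frac1n\sum_i f(x_i)g(x_i)$, $\|f\|_n^2=\langle f,f\rangle_n$. A dictionary $\{\phi_1,\dots,\phi_M\}$ is fixed; $\mathcal{M}$ is the set of subsets $m\subset\{1,\dots,M\}$, $\mathcal{S}_m=\{\sum_{j\in m}\beta_j\phi_j\}$, $D_m=\dim\mathrm{span}\{\phi_j,j\in m\}$. $\mathbb{L}_\infty(C_0)=\{f:\max_{1\le i\le n}|f(x_i)|\le C_0\}$. *)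

From HB Require Import structures.
From mathcomp Require Import all_boot all_order all_algebra.
From mathcomp Require Import all_classical all_reals all_analysis.
Set Implicit Arguments. Unset Strict Implicit. Unset Printing Implicit Defensive.
Import Order.TTheory GRing.Theory Num.Theory.
Local Open Scope ring_scope.

Section Defs.
Variables (R : realType) (X : Type) (n : nat) (x : 'I_n -> X).

Definition logistic (f : X -> R) (t : X) : R := expR (f t) / (1 + expR (f t)).

Definition inner_n (f g : X -> R) : R := n%:R^-1 * \sum_(i < n) f (x i) * g (x i).
Definition sqnorm_n (f : X -> R) : R := inner_n f f.

Definition gamma_n (Y : 'I_n -> R) (f : X -> R) : R :=
  n%:R^-1 * \sum_(i < n) (ln (1 + expR (f (x i))) - Y i * f (x i)).

(* gamma(f) = E_{f0}[gamma_n(f)]: by linearity, since E(Y_i) = pi_{f0}(x_i),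
   this is gamma_n evaluated at Y_i := pi_{f0}(x_i). *)
Definition gamma (f0 : X -> R) (f : X -> R) : R :=
  gamma_n (fun i => logistic f0 (x i)) f.

Definition Linf (C0 : R) (f : X -> R) : Prop := forall i : 'I_n, `|f (x i)| <= C0.
End Defs.

Definition in_Sm (R : realType) (X : Type) (M : nat) (phi : 'I_M -> X -> R)
  (m : {set 'I_M}) (f : X -> R) : Prop :=
  exists b : 'I_M -> R, f = (fun t => \sum_(j in m) b j * phi j t).

Definition fbeta (R : realType) (X : Type) (D : nat) (psi : 'I_D -> X -> R)
  (beta : 'I_D -> R) : X -> R := fun t => \sum_(j < D) beta j * psi j t.

From HB Require Import structures.
From mathcomp Require Import all_boot all_order all_algebra.
From mathcomp Require Import all_classical all_reals all_analysis.
From mathcomp Require Import ring lra.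
Import Order.TTheory GRing.Theory Num.Theory numFieldNormedType.Exports.
Local Open Scope ring_scope.

Set Implicit Arguments.
Unset Strict Implicit.

(* On [-C0, C0] the second derivative e^s/(1+e^s)^2 of s |-> ln(1+e^s) is at
   least U0, so s |-> ln(1+e^s) - U0/2 s^2 is convex there, and the contrast is
   U0-strongly convex on the convex set Lambda_m.  Writing f = f_beta and
   g = f_beta_star, minimality of g against the admissible convex combination
   U0 g + (1-U0) f gives
   (1-U0) (gamma f - gamma g) >= U0/2 U0 (1-U0) ||f - g||_n^2. *)

Section SoftplusConvexity.
Variable R : realType.

Definition sigmoid_slope (s : R) : R := expR s / (1 + expR s) ^+ 2.

Lemma sigmoid_slope_gt0 (s : R) : 0 < sigmoid_slope s.
Proof. by rewrite divr_gt0 ?expR_gt0 // exprn_gt0 // addr_gt0 ?expR_gt0. Qed.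

Lemma sigmoid_slope_lt1 (s : R) : sigmoid_slope s < 1.
Proof.
have e0 := expR_gt0 s.
by rewrite ltr_pdivrMr ?exprn_gt0 ?addr_gt0 // mul1r; nra.
Qed.

(* e^s/(1+e^s)^2 is even and decreasing in |s|. *)
Lemma sigmoid_slope_ge (C0 s : R) :
  `|s| <= C0 -> sigmoid_slope C0 <= sigmoid_slope s.
Proof.
rewrite ler_norml => /andP[C0s sC].
have u0 : 0 < expR s := expR_gt0 s.
have v0 : 0 < expR C0 := expR_gt0 C0.
have uv : expR s <= expR C0 by rewrite ler_expR.
have uv1 : 1 <= expR s * expR C0.
  by rewrite -expRD -expR0 ler_expR -lerBlDr sub0r.
rewrite /sigmoid_slope.
set u := expR s in u0 uv uv1 *; set v := expR C0 in v0 uv uv1 *.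
rewrite ler_pdivrMr ?exprn_gt0 ?addr_gt0 // mulrAC ler_pdivlMr ?exprn_gt0 ?addr_gt0 //.
nra.
Qed.

Lemma one_plus_expR_gt0 (s : R) : 0 < 1 + expR s.
Proof. by rewrite addr_gt0 // expR_gt0. Qed.

Lemma is_derive_one_plus_expR (s : R) :
  is_derive s 1 (fun s : R => 1 + expR s) (expR s).
Proof.
have h := is_deriveD (is_derive_cst (1 : R) s 1) (is_derive_expR s).
by rewrite add0r in h.
Qed.

Definition softplus_sub_sq (k s : R) : R := ln (1 + expR s) - k * s ^+ 2.

Lemma is_derive_softplus_sub_sq (k s : R) :
  is_derive s 1 (softplus_sub_sq k) (expR s / (1 + expR s) - k * (2 * s)).
Proof.
have dln : is_derive s 1 ((@ln R) \o (fun s : R => 1 + expR s))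
                     ((1 + expR s)^-1 * expR s).
  apply: is_derive1_comp (is_derive_one_plus_expR s).
  exact: is_derive1_ln (one_plus_expR_gt0 s).
apply: is_derive_eq (is_deriveB dln (is_deriveZ k (is_deriveX 2 (is_derive_id s 1)))) _.
by rewrite /= expr1 [_^-1 * _]mulrC /GRing.scale /= mulr1.
Qed.

Lemma is_derive2_softplus_sub_sq (k s : R) :
  is_derive s 1 (fun s => expR s / (1 + expR s) - k * (2 * s))
    (sigmoid_slope s - k * 2).
Proof.
have ne := lt0r_neq0 (one_plus_expR_gt0 s).
have dinv :=
  @is_deriveV R (fun s : R => 1 + expR s) s _ _ ne (is_derive_one_plus_expR s).
apply: is_derive_eq
  (is_deriveB (is_deriveM (is_derive_expR s) dinv)
              (is_deriveZ k (is_deriveZ 2 (is_derive_id s 1)))) _.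
rewrite /GRing.scale /sigmoid_slope /=.
by set e := expR s in ne *; field.
Qed.

Lemma derive1_softplus_sub_sq (k : R) :
  'D_1 (softplus_sub_sq k) = fun s => expR s / (1 + expR s) - k * (2 * s).
Proof. by apply/funext => s; have [_ ->] := is_derive_softplus_sub_sq k s. Qed.

Lemma continuous_softplus_sub_sq (k s : R) : {for s, continuous (softplus_sub_sq k)}.
Proof.
apply: differentiable_continuous; apply/derivable1_diffP.
by have [] := is_derive_softplus_sub_sq k s.
Qed.

Local Open Scope convex_scope.
Lemma softplus_sub_sq_convex_le (k a b : R) (t : {i01 R}) : a <= b ->
  (forall s, a < s < b -> k * 2 <= sigmoid_slope s) ->
  softplus_sub_sq k ((a : R^o) <| t |> (b : R^o))
    <= (softplus_sub_sq k a : R^o) <| t |> (softplus_sub_sq k b : R^o).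
Proof.
move=> ab slope_ge.
apply: second_derivative_convex => //.
- move=> s /slope_ge; rewrite derive1_softplus_sub_sq -subr_ge0.
  by have [_ ->] := is_derive2_softplus_sub_sq k s.
- exact/cvg_at_left_filter/continuous_softplus_sub_sq.
- exact/cvg_at_right_filter/continuous_softplus_sub_sq.
- by move=> s _; have [] := is_derive_softplus_sub_sq k s.
- move=> s _; rewrite derive1_softplus_sub_sq.
  by have [] := is_derive2_softplus_sub_sq k s.
Qed.
Local Close Scope convex_scope.

Lemma softplus_sub_sq_convex (k a b t : R) : 0 <= t <= 1 ->
  (forall s, Num.min a b < s < Num.max a b -> k * 2 <= sigmoid_slope s) ->
  softplus_sub_sq k (t * a + (1 - t) * b)
    <= t * softplus_sub_sq k a + (1 - t) * softplus_sub_sq k b.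
Proof.
move=> /andP[t0 t1] slope_ge.
have [ab|ba] := leP a b.
  have := softplus_sub_sq_convex_le (k:=k) (Itv01 t0 t1) ab.
  rewrite !convRE /=; apply=> s /andP[lo hi].
  by apply: slope_ge; rewrite (min_idPl ab) (max_idPr ab) lo hi.
have t0' : 0 <= 1 - t by rewrite subr_ge0.
have t1' : 1 - t <= 1 by rewrite lerBlDr lerDl.
have le := softplus_sub_sq_convex_le (k:=k) (Itv01 t0' t1') (ltW ba).
have onemK : unstable.onem (1 - t) = t by rewrite /unstable.onem opprB addrC subrK.
rewrite !convRE /= onemK in le.
rewrite addrC [X in _ <= X]addrC; apply: le => s /andP[lo hi].
by apply: slope_ge; rewrite (min_idPr (ltW ba)) (max_idPl (ltW ba)) lo hi.
Qed.

Lemma softplus_strong_convex (C0 a b t : R) :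
  `|a| <= C0 -> `|b| <= C0 -> 0 <= t <= 1 ->
  ln (1 + expR (t * a + (1 - t) * b))
    <= t * ln (1 + expR a) + (1 - t) * ln (1 + expR b)
       - sigmoid_slope C0 / 2 * t * (1 - t) * ((b - a) * (b - a)).
Proof.
rewrite !ler_norml => /andP[Ca aC] /andP[Cb bC] t01.
have slope_ge s : Num.min a b < s < Num.max a b ->
    sigmoid_slope C0 / 2 * 2 <= sigmoid_slope s.
  move=> /andP[lo hi]; rewrite mulfVK ?pnatr_eq0 //; apply: sigmoid_slope_ge.
  rewrite ler_norml; apply/andP; split.
  - by apply: le_trans (ltW lo); rewrite le_min Ca Cb.
  - by apply: le_trans (ltW hi) _; rewrite ge_max aC bC.
have := softplus_sub_sq_convex t01 slope_ge.
rewrite /softplus_sub_sq; lra.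
Qed.
End SoftplusConvexity.

Lemma convex_min_gap (R : realType) (gs gc gf k q t : R) : t < 1 ->
  gs <= gc -> gc <= t * gs + (1 - t) * gf - k * t * (1 - t) * q ->
  k * t * q <= gf - gs.
Proof. by move=> t1 sc cf; rewrite -(ler_pM2l (_ : 0 < 1 - t)) ?subr_gt0 //; lra. Qed.

Section EmpiricalContrast.
Variables (R : realType) (X : Type) (n : nat) (x : 'I_n -> X).

Lemma Linf_convex (C0 t : R) (f g : X -> R) : 0 <= t <= 1 ->
  Linf x C0 f -> Linf x C0 g -> Linf x C0 (fun s => t * f s + (1 - t) * g s).
Proof.
move=> /andP[t0 t1] fC0 gC0 i; have := fC0 i; have := gC0 i.
rewrite !ler_norml => /andP[? ?] /andP[? ?]; apply/andP; split; nra.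
Qed.

Lemma gamma_n_strong_convex (Y : 'I_n -> R) (C0 t : R) (f g : X -> R) :
  Linf x C0 f -> Linf x C0 g -> 0 <= t <= 1 ->
  gamma_n x Y (fun s => t * f s + (1 - t) * g s)
    <= t * gamma_n x Y f + (1 - t) * gamma_n x Y g
       - sigmoid_slope C0 / 2 * t * (1 - t) * sqnorm_n x (fun s => g s - f s).
Proof.
move=> fC0 gC0 t01; rewrite /gamma_n /sqnorm_n /inner_n.
set c := sigmoid_slope C0 / 2 * t * (1 - t).
rewrite [X in _ <= X](_ : _ = n%:R^-1 * \sum_(i < n)
    (t * (ln (1 + expR (f (x i))) - Y i * f (x i))
     + (1 - t) * (ln (1 + expR (g (x i))) - Y i * g (x i))
     - c * ((g (x i) - f (x i)) * (g (x i) - f (x i))))); last first.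
  by rewrite [in RHS]sumrB [in RHS]big_split /= -!mulr_sumr; ring.
apply: ler_wpM2l; first by rewrite invr_ge0.
apply: ler_sum => i _.
have := softplus_strong_convex (fC0 i) (gC0 i) t01.
rewrite /c; lra.
Qed.

End EmpiricalContrast.

Lemma in_Sm_lincomb (R : realType) (X : Type) (M : nat) (phi : 'I_M -> X -> R)
    (m : {set 'I_M}) (a b : R) (f g : X -> R) :
  in_Sm phi m f -> in_Sm phi m g -> in_Sm phi m (fun s => a * f s + b * g s).
Proof.
move=> [cf ->] [cg ->]; exists (fun j => a * cf j + b * cg j).
apply/funext => s; rewrite !mulr_sumr -big_split /=.
by apply: eq_bigr => j _; ring.
Qed.

Lemma fbeta_lincomb (R : realType) (X : Type) (D : nat) (psi : 'I_D -> X -> R)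
    (a b : R) (beta1 beta2 : 'I_D -> R) :
  fbeta psi (fun j => a * beta1 j + b * beta2 j)
    = fun s => a * fbeta psi beta1 s + b * fbeta psi beta2 s.
Proof.
apply/funext => s; rewrite /fbeta !mulr_sumr -big_split /=.
by apply: eq_bigr => j _; ring.
Qed.

Theorem lemma6p2 (R : realType) (X : Type) (n : nat) (x : 'I_n -> X)
  (f0 : X -> R) (M : nat) (phi : 'I_M -> X -> R) (m : {set 'I_M})
  (C0 : R) (D : nat) (psi : 'I_D -> X -> R) (beta_star : 'I_D -> R) :
  (0 < n)%N ->
  0 < C0 ->
  (* psi is an orthonormal basis of span{phi_k, k in m} for <.,.>_n *)
  (forall j : 'I_D, in_Sm phi m (psi j)) ->
  (forall j k : 'I_D, inner_n x (psi j) (psi k) = (j == k)%:R) ->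
  (forall k : 'I_M, k \in m ->
     exists c : 'I_D -> R, phi k = (fun t => \sum_(j < D) c j * psi j t)) ->
  let U0 := expR C0 / (1 + expR C0) ^+ 2 in
  let Lambda := fun beta : 'I_D -> R =>
    in_Sm phi m (fbeta psi beta) /\ Linf x C0 (fbeta psi beta) in
  (* beta_star minimizes beta |-> gamma(f_beta) over Lambda_m *)
  Lambda beta_star ->
  (forall beta, Lambda beta ->
     gamma x f0 (fbeta psi beta_star) <= gamma x f0 (fbeta psi beta)) ->
  forall beta, Lambda beta ->
    U0 ^+ 2 / 2 * sqnorm_n x (fun t => fbeta psi beta t - fbeta psi beta_star t)
    <= gamma x f0 (fbeta psi beta) - gamma x f0 (fbeta psi beta_star).
Proof.
move=> _ _ _ _ _ U0 Lambda [Sm_star Linf_star] minimal beta [Sm_beta Linf_beta].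
have U0_01 : 0 <= U0 <= 1 by rewrite ltW ?sigmoid_slope_gt0 ?ltW ?sigmoid_slope_lt1.
set comb := fun j => U0 * beta_star j + (1 - U0) * beta j.
have Lambda_comb : Lambda comb.
  rewrite /Lambda /comb fbeta_lincomb; split; first exact: in_Sm_lincomb.
  exact: Linf_convex.
have := gamma_n_strong_convex (fun i => logistic f0 (x i)) Linf_star Linf_beta U0_01.
rewrite -fbeta_lincomb -/comb => convex_comb.
have := convex_min_gap (sigmoid_slope_lt1 C0) (minimal _ Lambda_comb) convex_comb.
by rewrite /gamma -/U0 [U0 ^+ 2 / 2]mulrAC.
Qed.
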